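(* Let $\mathcal{H}$ be a Hilbert space and $A$ a self-adjoint operator on $\mathcal{H}$, semi-bounded below, with compact resolvent. Let $\mathcal{L}\subset\mathrm{D}(A)$ be a finite-dimensional subspace. Let $s,t\notin\mathrm{Spec}(A)$ with $t<s$, and let $u\in\mathcal{L}$ be such that either $\mathfrak{a}^1_t(u,u)<0$ or $\mathfrak{a}^1_s(u,u)>0$. Then \[ t+\frac{\mathfrak{a}^2_t(u,u)}{\mathfrak{a}^1_t(u,u)}\le s+\frac{\mathfrak{a}^2_s(u,u)}{\mathfrak{a}^1_s(u,u)}.\]
   Context: For $r\in\mathbb{R}$ and $u,v\in\mathrm{D}(A)$, $\mathfrak{a}^1_r(u,v)=\langle (A-r)u,v\rangle$ and $\mathfrak{a}^2_r(u,v)=\langle (A-r)u,(A-r)v\rangle$. *)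

From HB Require Import structures.
From mathcomp Require Import all_boot all_order all_algebra.
From mathcomp Require Import complex.
From mathcomp Require Import reals.
Set Implicit Arguments. Unset Strict Implicit. Unset Printing Implicit Defensive.
Import Order.TTheory GRing.Theory Num.Theory.
Local Open Scope ring_scope.
Local Open Scope complex_scope.

Section Hilbert.
Variable R : realType.
Local Notation C := R[i].
Variable H : lmodType C.
Variable ip : H -> H -> C.   (* inner product, linear in the first argument *)

Definition hnorm (x : H) : R := Num.sqrt (complex.Re (ip x x)).

Definition cauchy_seq (u : nat -> H) : Prop :=
  forall e : R, 0 < e -> exists N : nat,
    forall m n : nat, (N <= m)%N -> (N <= n)%N -> hnorm (u m - u n) < e.

Definition converges_to (u : nat -> H) (l : H) : Prop :=
  forall e : R, 0 < e -> exists N : nat, forall n : nat, (N <= n)%N -> hnorm (u n - l) < e.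

Definition is_hilbert_space : Prop :=
  [/\ (forall (a : C) (x y z : H), ip (a *: x + y) z = a * ip x z + ip y z),
      (forall x y : H, ip y x = (ip x y)^*),
      (forall x : H, 0 <= ip x x),
      (forall x : H, ip x x = 0 -> x = 0)
    & (forall u : nat -> H, cauchy_seq u -> exists l : H, converges_to u l)].

Definition is_subspace (D : H -> Prop) : Prop :=
  D 0 /\ forall (a : C) (x y : H), D x -> D y -> D (a *: x + y).

Definition finite_dim_subspace (L : H -> Prop) : Prop :=
  exists (n : nat) (e : 'I_n -> H),
    forall x : H, L x <-> exists c : 'I_n -> C, x = \sum_(i < n) c i *: e i.

Definition is_operator (D : H -> Prop) (A : H -> H) : Prop :=
  is_subspace D /\
  forall (a : C) (x y : H), D x -> D y -> A (a *: x + y) = a *: A x + A y.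

(* self-adjoint: symmetric and D(A^* ) included in D(A) with A^* = A there *)
Definition self_adjoint (D : H -> Prop) (A : H -> H) : Prop :=
  is_operator D A /\
  (forall u v : H, D u -> D v -> ip (A u) v = ip u (A v)) /\
  (forall v w : H, (forall u : H, D u -> ip (A u) v = ip u w) -> D v /\ A v = w).

Definition semibounded_below (D : H -> Prop) (A : H -> H) : Prop :=
  exists c : R, forall u : H, D u -> c%:C * ip u u <= ip (A u) u.

Definition bounded_linear (B : H -> H) : Prop :=
  (forall (a : C) (x y : H), B (a *: x + y) = a *: B x + B y) /\
  exists M : R, forall x : H, hnorm (B x) <= M * hnorm x.

Definition compact_operator (B : H -> H) : Prop :=
  bounded_linear B /\
  forall x : nat -> H, (exists M : R, forall n, hnorm (x n) <= M) ->
    exists (phi : nat -> nat) (l : H),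
      (forall n, (phi n < phi n.+1)%N) /\ converges_to (fun n => B (x (phi n))) l.

Definition is_resolvent (D : H -> Prop) (A : H -> H) (z : C) (B : H -> H) : Prop :=
  [/\ bounded_linear B,
      (forall f : H, D (B f) /\ A (B f) - z *: B f = f)
    & (forall u : H, D u -> B (A u - z *: u) = u)].

Definition spectrum (D : H -> Prop) (A : H -> H) (z : C) : Prop :=
  ~ exists B : H -> H, is_resolvent D A z B.

Definition compact_resolvent (D : H -> Prop) (A : H -> H) : Prop :=
  exists (z : C) (B : H -> H), is_resolvent D A z B /\ compact_operator B.

Definition form1 (A : H -> H) (r : R) (u v : H) : C := ip (A u - r%:C *: u) v.
Definition form2 (A : H -> H) (r : R) (u v : H) : C :=
  ip (A u - r%:C *: u) (A v - r%:C *: v).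

End Hilbert.

From HB Require Import structures.
From mathcomp Require Import all_boot all_order all_algebra.
From mathcomp Require Import complex.
From mathcomp Require Import reals.
From mathcomp Require Import ring lra.
Set Implicit Arguments. Unset Strict Implicit. Unset Printing Implicit Defensive.
Import Order.TTheory GRing.Theory Num.Theory.
Local Open Scope ring_scope.
Local Open Scope complex_scope.

(* Only the symmetry of [A] and the inner-product axioms matter.  With
   [n = <u,u>], [a = <Au,u>] and [b = <Au,Au>], all real, one has
   [a^1_r(u,u) = a - r n] and [a^2_r(u,u) = b - 2 r a + r^2 n >= 0], so
   [r + a^2_r / a^1_r = (b - r a) / (a - r n)].  The difference of these
   quotients at [s] and [t] is [(s - t)(b n - a^2) / ((a - t n)(a - s n))]:
   the numerator is nonnegative by Cauchy-Schwarz, and the hypothesis on [u]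
   forces both denominators to have the same sign since [a - s n <= a - t n]. *)

Section RealQuotients.
Variable R : realFieldType.
Variables a b n : R.

Definition quad (r : R) : R := b - 2 * r * a + r ^+ 2 * n.

Hypothesis quad_ge0 : forall r, 0 <= quad r.
Hypothesis n_ge0 : 0 <= n.

Lemma quad_discriminant_le0 : a ^+ 2 <= b * n.
Proof.
have [n0 | n_neq0] := eqVneq n 0.
  rewrite n0 mulr0; have [-> | a_neq0] := eqVneq a 0; first by rewrite expr0n.
  (* a nonconstant affine function takes the value [-1] *)
  have := quad_ge0 ((b + 1) / (2 * a)); rewrite /quad n0 mulr0 addr0.
  have -> : 2 * ((b + 1) / (2 * a)) * a = b + 1 by field.
  lra.
have n_gt0 : 0 < n by rewrite lt_def n_neq0.
have := quad_ge0 (a / n); rewrite /quad.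
have -> : b - 2 * (a / n) * a + (a / n) ^+ 2 * n = (b * n - a ^+ 2) / n by field.
by rewrite pmulr_lge0 ?invr_gt0 // subr_ge0.
Qed.

Lemma add_quad_quotient (r : R) : a - r * n != 0 ->
  r + quad r / (a - r * n) = (b - r * a) / (a - r * n).
Proof. by move=> nz; rewrite /quad; field. Qed.

Lemma add_quad_quotient_le (s t : R) :
  t < s -> 0 < (a - t * n) * (a - s * n) ->
  t + quad t / (a - t * n) <= s + quad s / (a - s * n).
Proof.
move=> lt_ts den_gt0.
have t_neq0 : a - t * n != 0 by apply: contraTneq den_gt0 => ->; rewrite mul0r ltxx.
have s_neq0 : a - s * n != 0 by apply: contraTneq den_gt0 => ->; rewrite mulr0 ltxx.
rewrite !add_quad_quotient // -subr_ge0.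
have -> : (b - s * a) / (a - s * n) - (b - t * a) / (a - t * n)
        = (s - t) * (b * n - a ^+ 2) / ((a - t * n) * (a - s * n)).
  by field; rewrite t_neq0 s_neq0.
have := quad_discriminant_le0.
by move=> cs; rewrite divr_ge0 ?(ltW den_gt0) // mulr_ge0; lra.
Qed.

Lemma shifted_denominators_pos (s t : R) : t < s ->
  a - t * n < 0 \/ 0 < a - s * n -> 0 < (a - t * n) * (a - s * n).
Proof.
move=> lt_ts hts; have tn_le_sn : t * n <= s * n by rewrite ler_wpM2r // ltW.
case: hts => [neg | pos]; first by rewrite nmulr_rgt0 //; lra.
by rewrite pmulr_rgt0 //; lra.
Qed.

End RealQuotients.

Lemma selfconj_real (R : realType) (x : R[i]) : x^* = x -> x = (complex.Re x)%:C.
Proof. by case: x => a c [] /= c0; rewrite /real_complex_def; congr (_ +i* _); lra. Qed.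

Lemma ge0_complex_real (R : realType) (x : R[i]) : 0 <= x -> x = (complex.Re x)%:C.
Proof. by case: x => a c /= /ger0_Im /= ->. Qed.

Section SymmetricForms.
Variable R : realType.
Variable H : lmodType R[i].
Variable ip : H -> H -> R[i].
Variable A : H -> H.
Variable u : H.

Hypothesis ipDl : forall (c : R[i]) (x y z : H), ip (c *: x + y) z = c * ip x z + ip y z.
Hypothesis ip_conj : forall x y : H, ip y x = (ip x y)^*.
Hypothesis ip_ge0 : forall x : H, 0 <= ip x x.
Hypothesis A_sym_u : ip (A u) u = ip u (A u).

Let n := complex.Re (ip u u).
Let a := complex.Re (ip (A u) u).
Let b := complex.Re (ip (A u) (A u)).

Let ip_uu : ip u u = n%:C. Proof. exact: ge0_complex_real. Qed.
Let ip_Au_u : ip (A u) u = a%:C.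
Proof. by apply: selfconj_real; rewrite -ip_conj A_sym_u. Qed.
Let ip_u_Au : ip u (A u) = a%:C. Proof. by rewrite ip_conj ip_Au_u conjc_real. Qed.
Let ip_Au_Au : ip (A u) (A u) = b%:C. Proof. exact: ge0_complex_real. Qed.

Let shift_eq (r : R) : A u - r%:C *: u = - r%:C *: u + A u.
Proof. by rewrite scaleNr addrC. Qed.

Lemma form1_selfE (r : R) : form1 ip A r u u = (a - r * n)%:C.
Proof.
rewrite /form1 shift_eq ipDl ip_uu ip_Au_u.
by rewrite rmorphB rmorphM mulNr addrC.
Qed.

Lemma form2_selfE (r : R) : form2 ip A r u u = (quad a b n r)%:C.
Proof.
have ip_u_shift : ip u (A u - r%:C *: u) = (a - r * n)%:C.
  by rewrite ip_conj -/(form1 ip A r u u) form1_selfE conjc_real.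
have ip_Au_shift : ip (A u) (A u - r%:C *: u) = (b - r * a)%:C.
  rewrite ip_conj shift_eq ipDl ip_u_Au ip_Au_Au.
  by rewrite -rmorphN -rmorphM -rmorphD conjc_real mulNr addrC.
rewrite /form2 {1}shift_eq ipDl ip_u_shift ip_Au_shift.
by rewrite -rmorphN -!rmorphM -rmorphD /quad; congr (_%:C); ring.
Qed.

Lemma quad_self_ge0 (r : R) : 0 <= quad a b n r.
Proof. by rewrite -lecR -form2_selfE; exact: ip_ge0. Qed.

Lemma self_ip_ge0 : 0 <= n.
Proof. by rewrite -lecR -ip_uu. Qed.

End SymmetricForms.

Theorem lemma3p1 (R : realType) (H : lmodType R[i]) (ip : H -> H -> R[i])
  (D : H -> Prop) (A : H -> H) (L : H -> Prop) (s t : R) (u : H) :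
  is_hilbert_space ip ->
  self_adjoint ip D A ->
  semibounded_below ip D A ->
  compact_resolvent ip D A ->
  is_subspace L -> finite_dim_subspace L -> (forall x, L x -> D x) ->
  ~ spectrum ip D A s%:C -> ~ spectrum ip D A t%:C -> t < s ->
  L u ->
  (form1 ip A t u u < 0 \/ form1 ip A s u u > 0) ->
  t%:C + form2 ip A t u u / form1 ip A t u u
    <= s%:C + form2 ip A s u u / form1 ip A s u u.
Proof.
move=> [ipDl ip_conj ip_ge0 _ _] [_ [A_sym _]] _ _ _ _ LD _ _ lt_ts Lu hu.
have A_sym_u := A_sym u u (LD u Lu) (LD u Lu).
have form1E := form1_selfE ipDl ip_conj ip_ge0 A_sym_u.
have quad_ge0 := quad_self_ge0 ipDl ip_conj ip_ge0 A_sym_u.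
have n_ge0 := self_ip_ge0 u ip_ge0.
rewrite !form1E !(form2_selfE ipDl ip_conj ip_ge0 A_sym_u).
rewrite -!fmorph_div -!rmorphD lecR.
apply: (add_quad_quotient_le quad_ge0 n_ge0 lt_ts).
by move: hu; rewrite !form1E !ltcR; apply: shifted_denominators_pos.
Qed.
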